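(* Let $\mathcal{L}$ be a base in a set $X$. Then for every $\alpha<\omega_1$, $\mathcal{L}(T_\alpha)=D_\alpha(\mathcal{L})$, where a set $A\subseteq X$ is identified with the $2$-partition $X\to 2$ given by its characteristic function.
   Context: A base in $X$ is a collection $\mathcal{L}$ of subsets of $X$ closed under finite intersections and countable unions (including the empty intersection $X$ and the empty union $\emptyset$). An ordinal $\alpha=\lambda+n$ ($\lambda$ zero or limit, $n<\omega$) is even if $n$ is even and odd otherwise; $r(\alpha)=0$ if even, $1$ otherwise. $D_\alpha(\{A_\beta\}_{\beta<\alpha})=\bigcup\{A_\beta\setminus\bigcup_{\gamma<\beta}A_\gamma\mid\beta<\alpha,\ r(\beta)\neq r(\alpha)\}$, and $D_\alpha(\mathcal{L})$ is the set of all such sets with all $A_\beta\in\mathcal{L}$. A (countable) forest is a countable poset without infinite chains in which every upper cone $\{y\mid x\leq y\}$ is a chain; a tree is a forest with a greatest element (root). A $k$-forest is a forest $(P;\leq)$ with a labeling $c:P\to k=\{0,\dots,k-1\}$. For a $k$-forest $F$ and $i<k$, $p_i(F)$ is the $k$-tree obtained by adding a new greatest element labeled $i$; $F_0\sqcup F_1\sqcup\cdots$ is the disjoint union; for a $2$-forest $F$, $\overline{F}$ is obtained by replacing every label $l$ by $1-l$. The $2$-trees $T_\alpha$, $\alpha<\omega_1$: $T_0$ is a single node labeled $0$; $T_{\alpha+1}=p_0(\overline{T}_\alpha)$; for limit $\lambda$, $T_\lambda=p_0(\overline{T}_{\alpha_0}\sqcup\overline{T}_{\alpha_1}\sqcup\cdots)$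 for some (any) sequence $\alpha_0<\alpha_1<\cdots$ of odd ordinals with supremum $\lambda$. For a $k$-forest $(P;\leq,c)$, $\mathcal{L}(P)$ is the set of $k$-partitions $A:X\to k$ such that there are sets $B_p\in\mathcal{L}$ ($p\in P$) with $\bigcup_{p\in P}B_p=X$ and $A^{-1}(i)=\bigcup\{\tilde{B}_p\mid p\in P,\ c(p)=i\}$ for each $i<k$, where $\tilde{B}_p=B_p\setminus\bigcup_{q<p}B_q$. *)

From mathcomp Require Import all_boot.
From mathcomp Require Import boolp classical_sets.

Set Implicit Arguments.
Unset Strict Implicit.
Unset Printing Implicit Defensive.

Local Open Scope classical_set_scope.

Definition is_base (X : Type) (L : set (set X)) : Prop :=
  [/\ L setT,
      L set0,
      (forall A B, L A -> L B -> L (A `&` B)) &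
      (forall F : nat -> set X, (forall n, L (F n)) -> L (\bigcup_n F n))].

(* An ordinal alpha < omega_1 is the order type of a countable strict
   well-order (W, wlt).  The ordinals beta < alpha are the order types of
   the initial segments {y | wlt y x}, x : W.  A "segment" is
   [None] (the whole of W, i.e. alpha itself) or [Some x]
   (the initial segment strictly below x, i.e. the ordinal of x). *)
Definition countable_wellorder (W : Type) (wlt : W -> W -> Prop) : Prop :=
  [/\ (exists f : W -> nat, injective f),
      (forall x, ~ wlt x x),
      (forall x y z, wlt x y -> wlt y z -> wlt x z),
      (forall x y, [\/ wlt x y, x = y | wlt y x]) &
      well_founded wlt].

Definition inseg (W : Type) (wlt : W -> W -> Prop) (s : option W) (y : W) : Prop :=
  match s with None => True | Some x => wlt y x end.

(* [is_max wlt s m]: m is the greatest element of segment s, i.e. the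
   ordinal of s is (ordinal of m) + 1. *)
Definition is_max (W : Type) (wlt : W -> W -> Prop) (s : option W) (m : W) : Prop :=
  inseg wlt s m /\ forall y, inseg wlt s y -> y = m \/ wlt y m.

(* Parity r of the ordinal of a segment: [seg_parity s b] with b = true iff
   odd. *)
Inductive seg_parity (W : Type) (wlt : W -> W -> Prop) : option W -> bool -> Prop :=
  | par_nomax s : (forall m, ~ is_max wlt s m) -> seg_parity wlt s false
  | par_succ s m b : is_max wlt s m -> seg_parity wlt (Some m) b ->
      seg_parity wlt s (~~ b).

Definition Dop (X W : Type) (wlt : W -> W -> Prop) (A : W -> set X) : set X :=
  \bigcup_(b in [set b | exists rb ra, [/\ seg_parity wlt (Some b) rb,
                                          seg_parity wlt None ra & rb != ra]])
    (A b `\` \bigcup_(c in [set c | wlt c b]) A c).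

Definition Dclass (X W : Type) (wlt : W -> W -> Prop) (L : set (set X)) : set (set X) :=
  [set S | exists A : W -> set X, (forall b, L (A b)) /\ S = Dop wlt A].

(* 2-forests (labels in 2 = bool, with 0 = false, 1 = true)            *)

Record forest2 := Forest2 {
  fcar : Type;
  fle : fcar -> fcar -> Prop;
  flab : fcar -> bool }.

Definition flt (F : forest2) (q p : fcar F) : Prop := fle q p /\ q <> p.

Definition fsingle : forest2 := @Forest2 unit (fun _ _ => True) (fun _ => false).

Definition fcompl (F : forest2) : forest2 :=
  @Forest2 (fcar F) (@fle F) (fun p => ~~ flab p).

Definition fle_root (F : forest2) (x y : option (fcar F)) : Prop :=
  match y, x with
  | None, _ => True
  | Some _, None => False
  | Some y', Some x' => fle x' y'
  end.

Definition froot (i : bool) (F : forest2) : forest2 :=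
  @Forest2 (option (fcar F)) (@fle_root F)
    (fun x => match x with None => i | Some x' => flab x' end).

Inductive sum_le (Fs : nat -> forest2) : {n : nat & fcar (Fs n)} ->
    {n : nat & fcar (Fs n)} -> Prop :=
  | sum_le_intro n (x y : fcar (Fs n)) :
      fle x y -> @sum_le Fs (existT _ n x) (existT _ n y).

Definition fsum (Fs : nat -> forest2) : forest2 :=
  @Forest2 {n : nat & fcar (Fs n)} (@sum_le Fs) (fun a => flab (projT2 a)).

(* [IsT wlt s T]: T is (a choice of) the tree T_alpha where alpha is the
   ordinal of the segment s.  The limit clause allows ANY sequence of odd
   ordinals alpha_0 < alpha_1 < ... with supremum lambda. *)
Inductive IsT (W : Type) (wlt : W -> W -> Prop) : option W -> forest2 -> Prop :=
  | IsT_zero s : (forall y, ~ inseg wlt s y) -> IsT wlt s fsingle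
  | IsT_succ s m T : is_max wlt s m -> IsT wlt (Some m) T ->
      IsT wlt s (froot false (fcompl T))
  | IsT_lim s (x : nat -> W) (Ts : nat -> forest2) :
      (exists y, inseg wlt s y) ->
      (forall m, ~ is_max wlt s m) ->
      (forall n, inseg wlt s (x n)) ->
      (forall n, wlt (x n) (x n.+1)) ->
      (forall y, inseg wlt s y -> exists n, wlt y (x n)) ->
      (forall n, seg_parity wlt (Some (x n)) true) ->
      (forall n, IsT wlt (Some (x n)) (Ts n)) ->
      IsT wlt s (froot false (fsum (fun n => fcompl (Ts n)))).

Definition Btilde (X : Type) (P : forest2) (B : fcar P -> set X) (p : fcar P) : set X :=
  B p `\` \bigcup_(q in [set q | flt q p]) B q.

Definition Lforest (X : Type) (L : set (set X)) (P : forest2) : set (X -> bool) :=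
  [set f | exists B : fcar P -> set X,
     [/\ (forall p, L (B p)),
         \bigcup_p B p = setT &
         forall i : bool, f @^-1` [set i] = \bigcup_(p in [set p | flab p = i]) Btilde B p]].

Definition chi (X : Type) (A : set X) : X -> bool := fun x => `[< A x >].

From Pilot Require Import Defs.
From mathcomp Require Import all_boot.
From mathcomp Require Import boolp classical_sets.

Set Implicit Arguments.
Unset Strict Implicit.
Unset Printing Implicit Defensive.

Local Open Scope classical_set_scope.

(* Call (d, v) represented by a 2-forest P when some B : P -> L has union v,
   d is the union of the ~B_p labelled 1, and the ~B_p labelled 0 miss d; call
   it a D_alpha-pair when d = D_alpha(A) and v = (U A) u C with all A_beta and C
   in L.  By induction along the construction of T_alpha, T_alpha represents
   exactly the D_alpha-pairs.  A new root labelled 0 only enlarges v by a set of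
   L, swapping labels turns (d, v) into (v \ d, v), and these two steps match
   D_(alpha+1)(A) = (A_alpha u U_(beta<alpha) A_beta) \ D_alpha(A).  At a limit
   lambda the families witnessing the pairs for the odd alpha_n < lambda are
   glued into one family indexed below lambda.  The theorem is the case v = X. *)

Section ForestRepresentation.
Variables (X : Type) (L : set (set X)).

Definition labelled (P : forest2) (B : fcar P -> set X) (j : bool) : set X :=
  \bigcup_(p in [set p | flab p = j]) Btilde B p.

Definition covered (P : forest2) (B : fcar P -> set X) : set X := \bigcup_p B p.

(* True for every forest, as forests have no infinite chains; it is only proved
   here for the trees T_alpha. *)
Definition labels_cover (P : forest2) : Prop :=
  forall B : fcar P -> set X, covered B `<=` labelled B true `|` labelled B false.

Definition represents (P : forest2) (d v : set X) : Prop :=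
  exists B : fcar P -> set X, [/\ forall p, L (B p), d = labelled B true,
    v = covered B & labelled B true `&` labelled B false = set0].

Lemma labelled_covered P (B : fcar P -> set X) j : labelled B j `<=` covered B.
Proof. by move=> z [p _ [hB _]]; exists p. Qed.

Lemma represents_sub P d v : represents P d v -> d `<=` v.
Proof. by case=> B [_ -> -> _]; exact: labelled_covered. Qed.

Lemma labelled_false P (B : fcar P -> set X) : labels_cover P ->
  labelled B true `&` labelled B false = set0 ->
  labelled B false = covered B `\` labelled B true.
Proof.
move=> hP hdisj; apply/seteqP; split=> z.
- move=> hf; split; first exact: labelled_covered hf.
  by move=> ht; have : (labelled B true `&` labelled B false) z by []; rewrite hdisj.
- by case=> /hP [].
Qed.

Lemma labelled_fsingle (B : fcar fsingle -> set X) j :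
  labelled B j = if j then set0 else B tt.
Proof.
apply/seteqP; split=> z; first by case=> -[] <- [].
by case: j => // h; exists tt => //; split => // -[[] [_ ]].
Qed.

Lemma labelled_fcompl F (B : fcar (fcompl F) -> set X) j :
  labelled B j = labelled (P:=F) B (~~ j).
Proof.
apply/seteqP; split=> z [p hp hB]; exists p => //=.
- by rewrite -hp negbK.
- by rewrite hp negbK.
Qed.

Lemma labelled_froot i F (B : fcar (Defs.froot i F) -> set X) j :
  labelled B j = labelled (P:=F) (B \o Some) j `|`
                 (if i == j then B None `\` covered (P:=F) (B \o Some) else set0).
Proof.
apply/seteqP; split=> z.
- case=> -[p|] hp [hB hmin].
  + left; exists p => //; split => // -[q [hqp hneq] hBq]; apply: hmin.
    by exists (Some q) => //; split => // -[].
  + right; rewrite /= in hp; rewrite hp eqxx; split => // -[q _ hBq]; apply: hmin.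
    by exists (Some q).
- case=> [[p hp [hB hmin]]|].
  + exists (Some p) => //; split => // -[[q|] [hqp hneq] hBq] //; apply: hmin.
    by exists q => //; split => // e; apply: hneq; rewrite e.
  + case: eqP => [<- [hB hcov]|//]; exists None => //; split => // -[[q|] [_ hneq] hBq] //.
    by apply: hcov; exists q.
Qed.

Lemma covered_froot i F (B : fcar (Defs.froot i F) -> set X) :
  covered B = B None `|` covered (P:=F) (B \o Some).
Proof.
apply/seteqP; split=> z; first by case=> -[p|] _ h; [right; exists p|left].
by case=> [h|[p _ h]]; [exists None|exists (Some p)].
Qed.

Lemma fsum_le_inv (Fs : nat -> forest2) q n (p : fcar (Fs n)) :
  sum_le q (existT _ n p) -> exists2 q' : fcar (Fs n), q = existT _ n q' & fle q' p.
Proof.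
move e: (existT _ n p) => b h; case: h e => m x y hxy e.
have enm : n = m := congr1 (@projT1 _ _) e; subst n.
by rewrite -(eq_from_Tagged e) in hxy; exists x.
Qed.

Lemma labelled_fsum Fs (B : fcar (fsum Fs) -> set X) j :
  labelled B j = \bigcup_n labelled (P:=Fs n) (fun p => B (existT _ n p)) j.
Proof.
apply/seteqP; split=> z.
- case=> -[n p] hp [hB hmin]; exists n => //; exists p => //; split => // -[q [hqp hneq] hBq].
  apply: hmin; exists (existT _ n q) => //; split; first by constructor.
  by move=> e; exact: hneq (eq_from_Tagged e).
- case=> n _ [p hp [hB hmin]]; exists (existT _ n p) => //; split => // -[q [hqp hneq] hBq].
  have [q' eq hq'] := fsum_le_inv hqp; subst q.
  by apply: hmin; exists q' => //; split => // e; apply: hneq; rewrite e.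
Qed.

Lemma covered_fsum Fs (B : fcar (fsum Fs) -> set X) :
  covered B = \bigcup_n covered (P:=Fs n) (fun p => B (existT _ n p)).
Proof.
apply/seteqP; split=> z; first by case=> -[n p] _ h; exists n => //; exists p.
by case=> n _ [p _ h]; exists (existT _ n p).
Qed.

Lemma labels_cover_fsingle : labels_cover fsingle.
Proof. by move=> B z [[] _ h]; right; rewrite labelled_fsingle. Qed.

Lemma labels_cover_fcompl F : labels_cover F -> labels_cover (fcompl F).
Proof. by move=> hP B z /hP; rewrite !labelled_fcompl; case; [right|left]. Qed.

Lemma labels_cover_froot i F : labels_cover F -> labels_cover (Defs.froot i F).
Proof.
move=> hP B z; rewrite covered_froot !labelled_froot => hz.
have [/hP [h|h]|hnot] := pselect (covered (P:=F) (B \o Some) z).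
- by left; left.
- by right; left.
- have hB : B None z by case: hz.
  by case: i {hz} B hB hnot => B hB hnot; [left|right]; right.
Qed.

Lemma labels_cover_fsum Fs : (forall n, labels_cover (Fs n)) -> labels_cover (fsum Fs).
Proof.
move=> hP B z; rewrite covered_fsum !labelled_fsum => -[n _ /hP [h|h]].
- by left; exists n.
- by right; exists n.
Qed.

Lemma labels_cover_IsT (W : Type) (wlt : W -> W -> Prop) s T :
  IsT wlt s T -> labels_cover T.
Proof.
elim=> {s T} [s _|s m T _ _ hP|s x Ts _ _ _ _ _ _ _ hP].
- exact: labels_cover_fsingle.
- exact/labels_cover_froot/labels_cover_fcompl.
- by apply/labels_cover_froot/labels_cover_fsum => n; exact/labels_cover_fcompl.
Qed.

Lemma represents_fsingle d v : represents fsingle d v <-> d = set0 /\ L v.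
Proof.
have covered_single (B : fcar fsingle -> set X) : covered B = B tt.
  by apply/seteqP; split=> z; [case=> -[]|exists tt].
split.
- by case=> B [hLB -> -> _]; rewrite labelled_fsingle (covered_single B).
- case=> -> hv; exists (fun _ : fcar fsingle => v); split => //.
  + by rewrite labelled_fsingle.
  + by rewrite !labelled_fsingle set0I.
Qed.

Lemma represents_froot_false F d v :
  represents (Defs.froot false F) d v <->
  exists w C, [/\ represents F d w, L C & v = C `|` w].
Proof.
split.
- case=> B [hLB -> -> hdisj]; rewrite !labelled_froot /= setU0 in hdisj *.
  exists (covered (P:=F) (B \o Some)), (B None); split => //; last exact: covered_froot.
  exists (B \o Some); split => //; first by move=> p; exact: hLB.
  by apply: subsetI_eq0 hdisj => //; exact: subsetUl.
- case=> w [C [[B [hLB -> -> hdisj]] hC ->]].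
  exists (fun q => if q is Some p then B p else C); split.
  + by case.
  + by rewrite labelled_froot /= setU0.
  + by rewrite covered_froot.
  + rewrite !labelled_froot /= setU0 setIUr hdisj set0U; apply/disjoints_subset.
    by move=> z /labelled_covered hz [].
Qed.

Lemma represents_fcompl F d v : labels_cover F ->
  represents (fcompl F) d v <-> exists o, represents F o v /\ d = v `\` o.
Proof.
move=> hP; split.
- case=> B [hLB -> -> hdisj]; rewrite !labelled_fcompl /= in hdisj *.
  exists (labelled (P:=F) B true); split; first by exists B; split => //; rewrite setIC.
  by apply: labelled_false => //; rewrite setIC.
- case=> o [[B [hLB -> -> hdisj]] ->]; exists B; split => //; rewrite !labelled_fcompl /=.
  + by rewrite labelled_false.
  + by rewrite setIC.
Qed.

Lemma represents_fsum Fs d v : (forall n, labels_cover (Fs n)) ->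
  represents (fsum Fs) d v <->
  exists ds vs : nat -> set X, [/\ forall n, represents (Fs n) (ds n) (vs n),
    forall n m, (vs n `\` ds n) `&` ds m = set0,
    d = \bigcup_n ds n & v = \bigcup_n vs n].
Proof.
move=> hP; split.
- case=> B [hLB -> -> hdisj].
  pose Bn n p : set X := B (existT _ n p).
  have hdisjnm n m : labelled (Bn n) false `&` labelled (Bn m) true = set0.
    apply/disjoints_subset => z hf ht; move/disjoints_subset: hdisj => /(_ z).
    by apply; rewrite labelled_fsum; [exists m|exists n].
  exists (fun n => labelled (Bn n) true), (fun n => covered (Bn n)); split.
  + move=> n; exists (Bn n); split => //; last by rewrite setIC hdisjnm.
    by move=> p; exact: hLB.
  + by move=> n m; rewrite -labelled_false ?hdisjnm // setIC hdisjnm.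
  + exact: labelled_fsum.
  + exact: covered_fsum.
- case=> ds [vs [hR hcross -> ->]].
  pose Bn n := sval (cid (hR n)).
  have hBn n := svalP (cid (hR n)).
  exists (fun a => Bn (projT1 a) (projT2 a)); split.
  + by case=> n p; case: (hBn n) => hLB _ _ _; exact: hLB.
  + by rewrite labelled_fsum; apply: eq_bigcupr => n _; case: (hBn n).
  + by rewrite covered_fsum; apply: eq_bigcupr => n _; case: (hBn n).
  + rewrite !labelled_fsum; apply/disjoints_subset => z [n _ ht] [m _ hf].
    have [_ hds _ _] := hBn n; have [_ hdsm hvsm hdisjm] := hBn m.
    move/disjoints_subset: (hcross m n) => /(_ z); apply; last by rewrite hds.
    by rewrite (labelled_false (hP m) hdisjm) -hvsm -hdsm in hf.
Qed.

Definition succ_rel (R : set X -> set X -> Prop) (d v : set X) : Prop :=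
  exists o w C, [/\ R o w, L C, d = w `\` o & v = C `|` w].

Definition lim_rel (R : nat -> set X -> set X -> Prop) (d v : set X) : Prop :=
  exists (o w : nat -> set X) C, [/\ forall n, R n (o n) (w n),
    forall n m, o n `&` (w m `\` o m) = set0, L C,
    d = \bigcup_n (w n `\` o n) & v = C `|` \bigcup_n w n].

Lemma succ_rel_iff R R' d v : (forall o w, R o w <-> R' o w) ->
  succ_rel R d v <-> succ_rel R' d v.
Proof.
by move=> hR; split; case=> o [w [C [h hC hd hv]]]; exists o, w, C; split => //; apply/hR.
Qed.

Lemma lim_rel_iff R R' d v : (forall n o w, R n o w <-> R' n o w) ->
  lim_rel R d v <-> lim_rel R' d v.
Proof.
move=> hR; split; case=> o [w [C [h hcross hC hd hv]]]; exists o, w, C.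
- by split => // n; apply/hR.
- by split => // n; apply/hR.
Qed.

Lemma represents_succ F d v : labels_cover F ->
  represents (Defs.froot false (fcompl F)) d v <-> succ_rel (represents F) d v.
Proof.
move=> hP; apply: iff_trans (represents_froot_false _ _ _) _; split.
- by case=> w [C [/(represents_fcompl _ _ hP) [o [hR ->]] hC ->]]; exists o, w, C.
- case=> o [w [C [hR hC -> ->]]]; exists w, C; split => //.
  by apply/represents_fcompl => //; exists o.
Qed.

Lemma represents_lim (Ts : nat -> forest2) d v : (forall n, labels_cover (Ts n)) ->
  represents (Defs.froot false (fsum (fun n => fcompl (Ts n)))) d v <->
  lim_rel (fun n => represents (Ts n)) d v.
Proof.
move=> hP; have hPc n : labels_cover (fcompl (Ts n)) by exact: labels_cover_fcompl.
have setDD_sub n o w : represents (Ts n) o w -> w `\` (w `\` o) = o.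
  by move=> hR; rewrite setDD setIidr //; exact: represents_sub hR.
apply: iff_trans (represents_froot_false _ _ _) _; split.
- case=> w [C [/(represents_fsum _ _ hPc) [ds [vs [hR hcross -> ->]]] hC ->]].
  have [o ho] := choice (fun n => iffLR (represents_fcompl _ _ (hP n)) (hR n)).
  exists o, vs, C; split => //.
  + by move=> n; case: (ho n).
  + move=> n m; have [hRn hdn] := ho n; have [_ hdm] := ho m.
    by move: (hcross n m); rewrite hdn hdm (setDD_sub _ _ _ hRn).
  + by apply: eq_bigcupr => n _; case: (ho n).
- case=> o [w [C [hR hcross hC -> ->]]]; exists (\bigcup_n w n), C; split => //.
  apply/represents_fsum => //; exists (fun n => w n `\` o n), w; split => //.
  + by move=> n; apply/represents_fcompl => //; exists (o n).
  + by move=> n m; rewrite (setDD_sub _ _ _ (hR n)).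
Qed.

Lemma preimage_chi (A : set X) (b : bool) : chi A @^-1` [set b] = if b then A else ~` A.
Proof. by apply/seteqP; split=> z /=; case: b; rewrite /chi; case: asboolP. Qed.

Lemma Lforest_chi P (A : set X) : labels_cover P ->
  Lforest L P (chi A) <-> represents P A setT.
Proof.
move=> hP; split.
- case=> B [hLB hcov hlab].
  have hlab' i : chi A @^-1` [set i] = labelled B i := hlab i.
  exists B; split => //.
  + by rewrite -hlab' preimage_chi.
  + by rewrite -!hlab' !preimage_chi setICr.
- case=> B [hLB hA hcov hdisj]; exists B; split => //; case; rewrite preimage_chi //.
  by change (~` A = labelled B false); rewrite (labelled_false hP hdisj) -hcov -hA setTD.
Qed.
End ForestRepresentation.

Section SegmentDifferences.
Variables (X : Type) (L : set (set X)) (W : Type) (wlt : W -> W -> Prop).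
Hypotheses (hL : is_base L) (hW : countable_wellorder wlt).

Lemma wlt_irr b : ~ wlt b b. Proof. by case: hW. Qed.

Lemma wlt_trans a b c : wlt a b -> wlt b c -> wlt a c.
Proof. by case: hW => _ _ h _ _; exact: h. Qed.

Lemma wlt_total a b : [\/ wlt a b, a = b | wlt b a].
Proof. by case: hW => _ _ _ h _. Qed.

Lemma inseg_trans s b c : wlt b c -> inseg wlt s c -> inseg wlt s b.
Proof. by case: s => //= y hbc; exact: wlt_trans. Qed.

Definition first_index (A : W -> set X) (z : X) (b : W) : Prop :=
  A b z /\ forall c, wlt c b -> ~ A c z.

Lemma first_index_exists A z b : A b z -> exists c, first_index A z c.
Proof.
case: hW => _ _ _ _ wf; move=> hb; apply: contrapT => hnone; move: hb.
elim/(well_founded_ind wf): b => b IH hb.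
by apply: hnone; exists b; split => // c hcb /(IH _ hcb).
Qed.

Lemma first_index_le A z b c : first_index A z b -> A c z -> b = c \/ wlt b c.
Proof.
by case=> _ hmin hc; case: (wlt_total b c) => [h|->|/hmin //]; [right|left].
Qed.

Lemma first_index_uniq A z b c : first_index A z b -> first_index A z c -> b = c.
Proof.
move=> hb [hc hminc]; case: (first_index_le hb hc) => // /hminc; by case: hb.
Qed.

Lemma is_max_uniq s m m' : is_max wlt s m -> is_max wlt s m' -> m = m'.
Proof.
case=> hm hmax [hm' hmax']; case: (hmax _ hm') => // h; case: (hmax' _ hm) => // h'.
by case: (wlt_irr (wlt_trans h h')).
Qed.

Lemma seg_parity_uniq s b b' : seg_parity wlt s b -> seg_parity wlt s b' -> b = b'.
Proof.
move=> h; elim: h b' => {s b} [s hn|s m b hm _ IH] b' h'.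
- by case: h' hn => // s' m b hm _ /(_ m).
- case: h' hm IH => [s' hn hm|s' m' c hm' hp' hm IH]; first by case: (hn m).
  by rewrite (is_max_uniq hm hm') in IH; rewrite (IH _ hp').
Qed.

Lemma seg_parity_exists s : exists b, seg_parity wlt s b.
Proof.
have step s' : (forall m, is_max wlt s' m -> exists b, seg_parity wlt (Some m) b) ->
    exists b, seg_parity wlt s' b.
{ case: (pselect (exists m, is_max wlt s' m)) => [[m hm] /(_ m hm) [b hb]|hn _].
  - by exists (~~ b); exact: par_succ hm hb.
  - by exists false; apply: par_nomax => m hm; apply: hn; exists m. }
case: hW => _ _ _ _ wf; apply: (step s) => m _.
elim/(well_founded_ind wf): m => m IH.
by apply: step => m' [hm' _]; exact: IH.
Qed.

Definition parity (s : option W) : bool := `[< seg_parity wlt s true >].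

Lemma parity_spec s : seg_parity wlt s (parity s).
Proof.
rewrite /parity; case: asboolP => // hnot.
by have [[] hb] := seg_parity_exists s.
Qed.

Lemma parityP s b : seg_parity wlt s b <-> parity s = b.
Proof.
split=> [|<-]; last exact: parity_spec.
exact: seg_parity_uniq (parity_spec s).
Qed.

Lemma parity_max s m : is_max wlt s m -> parity s = ~~ parity (Some m).
Proof. by move=> hm; apply/parityP; exact: par_succ hm (parity_spec _). Qed.

Lemma parity_nomax s : (forall m, ~ is_max wlt s m) -> parity s = false.
Proof. by move=> hn; apply/parityP/par_nomax. Qed.


Definition Useg (s : option W) (A : W -> set X) : set X := \bigcup_(b in inseg wlt s) A b.

(* D_alpha(A) for alpha the ordinal of s, read off the least index of each point. *)
Definition Dseg (s : option W) (A : W -> set X) : set X :=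
  [set z | exists b, [/\ inseg wlt s b, parity (Some b) != parity s & first_index A z b]].

Lemma Useg_first s A z b : first_index A z b -> Useg s A z <-> inseg wlt s b.
Proof.
move=> hb; split; last by exists b => //; case: hb.
by case=> c hc /(first_index_le hb) [->|/inseg_trans]; last exact.
Qed.

Lemma Dseg_first s A z b : first_index A z b ->
  Dseg s A z <-> inseg wlt s b /\ parity (Some b) != parity s.
Proof.
move=> hb; split; last by case=> hs hp; exists b.
by case=> c [hc hp hfc]; rewrite (first_index_uniq hb hfc).
Qed.

Lemma Useg_first_index s A z : Useg s A z -> exists2 b, inseg wlt s b & first_index A z b.
Proof.
case=> b hsb hAb; have [c hc] := first_index_exists hAb.
by exists c => //; apply/(Useg_first _ hc); exists b.
Qed.

Lemma Dseg_sub_Useg s A : Dseg s A `<=` Useg s A.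
Proof. by move=> z [b [hs _ [hb _]]]; exists b. Qed.

Lemma Dseg_firstN s A z b : first_index A z b -> inseg wlt s b -> ~ Dseg s A z ->
  parity (Some b) = parity s.
Proof. by move=> hb hs hnD; apply/eqP; apply: contra_notT hnD => hne; apply/(Dseg_first _ hb). Qed.

Lemma eq_Dseg s A A' : (forall b, inseg wlt s b -> A b = A' b) -> Dseg s A = Dseg s A'.
Proof.
have sub B B' : (forall b, inseg wlt s b -> B b = B' b) -> Dseg s B `<=` Dseg s B'.
  move=> hBB z [b [hs hp [hb hmin]]]; exists b; split => //; split; first by rewrite -hBB.
  by move=> c hcb; rewrite -hBB //; [exact: hmin|exact: inseg_trans hs].
by move=> h; apply/seteqP; split; apply: sub => // b /h.
Qed.

Lemma eq_Useg s A A' : (forall b, inseg wlt s b -> A b = A' b) -> Useg s A = Useg s A'.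
Proof. exact: eq_bigcupr. Qed.

Lemma Useg_max s m A : is_max wlt s m -> Useg s A = A m `|` Useg (Some m) A.
Proof.
case=> hm hmax; apply/seteqP; split=> z.
- by case=> b /hmax [->|hbm] hb; [left|right; exists b].
- by case=> [h|[b hbm h]]; [exists m|exists b => //; exact: inseg_trans hm].
Qed.

Lemma Dseg_max s m A : is_max wlt s m ->
  Dseg s A = (A m `|` Useg (Some m) A) `\` Dseg (Some m) A.
Proof.
move=> hm; have hps := parity_max hm; rewrite -(Useg_max _ hm); apply/seteqP; split=> z.
- move=> hD; split; first exact: Dseg_sub_Useg.
  case: hD => b [_ hp hb] /(Dseg_first _ hb) [_].
  by move: hp; rewrite hps; case: parity; case: parity.
- case=> /Useg_first_index [b hs hb] hnD; apply/(Dseg_first _ hb); split => //.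
  rewrite hps; case: (hm) => _ /(_ b hs) [->|hbm]; first by case: parity.
  by rewrite (Dseg_firstN (s:=Some m) hb hbm hnD); case: parity.
Qed.

Lemma base_setU S T : L S -> L T -> L (S `|` T).
Proof.
case: hL => _ _ _ hU hS hT.
have -> : S `|` T = \bigcup_n (if n is 0 then S else T).
  apply/seteqP; split=> z; first by case=> h; [exists 0|exists 1].
  by case=> -[|n] _ h; [left|right].
by apply: hU; case.
Qed.

Lemma base_Useg s A : (forall b, L (A b)) -> L (Useg s A).
Proof.
case: hL => _ h0 _ hU; case: hW => [[f hf] _ _ _ _] hA.
pose G k : set X := [set z | exists b, [/\ inseg wlt s b, f b = k & A b z]].
have -> : Useg s A = \bigcup_k G k.
  apply/seteqP; split=> z; first by case=> b hb h; exists (f b) => //; exists b.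
  by case=> k _ [b [hb _ h]]; exists b.
apply: hU => k; case: (pselect (exists2 b, inseg wlt s b & f b = k)) => [[b hb hk]|hn].
- have -> : G k = A b; last exact: hA.
  apply/seteqP; split=> z; last by exists b.
  by case=> b' [_ hk' h]; have -> : b = b' by apply: hf; rewrite hk hk'.
- have -> : G k = set0; last exact: h0.
  by apply/seteqP; split=> z // [b [hb hk _]]; apply: hn; exists b.
Qed.

Definition Dpair (s : option W) (d v : set X) : Prop :=
  exists A C, [/\ forall b, L (A b), L C, d = Dseg s A & v = Useg s A `|` C].

Lemma Dpair_zero s d v : (forall b, ~ inseg wlt s b) -> Dpair s d v <-> d = set0 /\ L v.
Proof.
move=> hs; have Useg0 A : Useg s A = set0.
  by apply/seteqP; split=> z // [b /hs].
have Dseg0 A : Dseg s A = set0.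
  by apply/seteqP; split=> z // /Dseg_sub_Useg; rewrite Useg0.
split; first by case=> A [C [_ hC -> ->]]; rewrite Dseg0 Useg0 set0U.
case=> -> hv; have [_ h0 _ _] := hL.
by exists (fun _ => set0), v; split => //; rewrite ?Dseg0 ?Useg0 ?set0U.
Qed.

Lemma Dpair_succ s m d v : is_max wlt s m ->
  Dpair s d v <-> succ_rel L (Dpair (Some m)) d v.
Proof.
move=> hm; split.
- case=> A [C [hA hC -> ->]].
  exists (Dseg (Some m) A), (A m `|` Useg (Some m) A), C; split => //.
  + by exists A, (A m); split => //; rewrite setUC.
  + exact: Dseg_max.
  + by rewrite (Useg_max _ hm) setUC.
- case=> o [w [C [[A [Cm [hA hCm -> ->]]] hC -> ->]]].
  pose A' b := if pselect (b = m) then Cm else A b.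
  have hA'm : A' m = Cm by rewrite /A'; case: pselect => // -[].
  have hA'A b : inseg wlt (Some m) b -> A' b = A b.
    by move=> hb; rewrite /A'; case: pselect => // e; rewrite e in hb; case: (wlt_irr hb).
  exists A', C; split => //.
  + by move=> b; rewrite /A'; case: pselect => h; [exact: hCm|exact: hA].
  + by rewrite (Dseg_max _ hm) hA'm (eq_Useg hA'A) (eq_Dseg hA'A) setUC.
  + by rewrite (Useg_max _ hm) hA'm (eq_Useg hA'A) setUC [Cm `|` _]setUC.
Qed.


Section Limit.
Variables (s : option W) (x : nat -> W).
Hypotheses (hnomax : forall m, ~ is_max wlt s m) (hxs : forall n, inseg wlt s (x n))
  (hcof : forall b, inseg wlt s b -> exists n, wlt b (x n))
  (hodd : forall n, seg_parity wlt (Some (x n)) true).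

Let parity_s : parity s = false := parity_nomax hnomax.
Let parity_x n : parity (Some (x n)) = true := iffLR (parityP _ _) (hodd n).

Lemma Useg_lim A : Useg s A = \bigcup_n Useg (Some (x n)) A.
Proof.
apply/seteqP; split=> z.
- by case=> b /hcof [n hbn] hb; exists n => //; exists b.
- by case=> n _ [b hbn hb]; exists b => //; exact: inseg_trans hbn (hxs n).
Qed.

Lemma Dseg_lim A : Dseg s A = \bigcup_n (Useg (Some (x n)) A `\` Dseg (Some (x n)) A).
Proof.
apply/seteqP; split=> z.
- case=> b [/hcof [n hbn] hp hb]; exists n => //; split; first exact/(Useg_first _ hb).
  by case/(Dseg_first _ hb) => _; move: hp; rewrite parity_s parity_x; case: parity.
- case=> n _ [/Useg_first_index [b hbn hb] hnD]; apply/(Dseg_first _ hb).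
  split; first exact: inseg_trans hbn (hxs n).
  by rewrite parity_s (Dseg_firstN hb hbn hnD) parity_x.
Qed.

Lemma Dseg_lim_disjoint A n m :
  Dseg (Some (x n)) A `&` (Useg (Some (x m)) A `\` Dseg (Some (x m)) A) = set0.
Proof.
apply/disjoints_subset => z [b [_ hp hb]] [/(Useg_first _ hb) hbm hnD].
by move: hp; rewrite (Dseg_firstN hb hbm hnD) !parity_x.
Qed.

Section Glue.
Variables (An : nat -> W -> set X) (o w : nat -> set X).
Hypotheses (ho : forall n, o n = Dseg (Some (x n)) (An n))
  (hUw : forall n, Useg (Some (x n)) (An n) `<=` w n)
  (hcross : forall n m, o n `&` (w m `\` o m) = set0).

(* The An n need not agree with each other below a common bound; hcross is what
   keeps the least index of every point under control. *)
Definition glue (b : W) : set X :=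
  \bigcup_n (if pselect (wlt b (x n)) then An n b
             else if pselect (b = x n) then w n else set0).

Lemma glueP b z : glue b z <-> exists n, (wlt b (x n) /\ An n b z) \/ (b = x n /\ w n z).
Proof.
split.
- case=> n _; case: pselect => [hb h|hb]; first by exists n; left.
  by case: pselect => [e h|_ //]; exists n; right.
- case=> n h; exists n => //; case: pselect => hb.
  + by case: h => [[_ h]|[e _]] //; exfalso; move: hb; rewrite e; exact: wlt_irr.
  + by case: h => [[/hb]|[e h]] //; case: pselect => // /(_ e).
Qed.

Lemma base_glue b : (forall n b, L (An n b)) -> (forall n, L (w n)) -> L (glue b).
Proof.
case: hL => _ h0 _ hU hA hw; apply: hU => n.
by case: pselect => h; [exact: hA|case: pselect => h'; [exact: hw|exact: h0]].
Qed.

Lemma Useg_glue : Useg s glue = \bigcup_n w n.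
Proof.
apply/seteqP; split=> z.
- by case=> b _ /glueP [n [[hbn h]|[_ h]]]; exists n => //; apply: hUw; exists b.
- case=> n _ h; exists (x n); first exact: hxs.
  by apply/glueP; exists n; right.
Qed.

Lemma Dseg_glue : Dseg s glue = \bigcup_n (w n `\` o n).
Proof.
apply/seteqP; split=> z.
- case=> b [hsb hp [hgb hmin]].
  have hpb : parity (Some b) = true by move: hp; rewrite parity_s; case: parity.
  case/glueP: (hgb) => n hn; exists n => //.
  have hwn : w n z by case: hn => [[hbn h]|[_ //]]; apply: hUw; exists b.
  split => //; rewrite ho => -[c [hcn hpc [hAc hminc]]].
  have hgc : glue c z by apply/glueP; exists n; left.
  case: (wlt_total b c) => [hbc|ebc|/hmin //].
  + case: hn => [[hbn hAb]|[ebn _]]; first exact: hminc b hbc hAb.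
    by rewrite ebn in hbc; case: (wlt_irr (wlt_trans hbc hcn)).
  + by move: hpc; rewrite -ebc hpb parity_x.
- case=> n _ [hwn hnon].
  have hg : glue (x n) z by apply/glueP; exists n; right.
  have [b hb] := first_index_exists hg.
  have hsb : inseg wlt s b.
    by case: (first_index_le hb hg) => [->|hbn]; [exact: hxs|exact: inseg_trans hbn (hxs n)].
  apply/(Dseg_first _ hb); split => //; rewrite parity_s.
  have [hgb hminb] := hb.
  case/glueP: hgb => k [[hbk hAk]|[-> _]]; last by rewrite parity_x.
  (* An even b would also be the least index of z in An k, putting z into o k. *)
  apply/negP => /eqP hpb; move/disjoints_subset: (hcross k n) => /(_ z); apply; last by [].
  rewrite ho; exists b; split => //; first by rewrite hpb parity_x.
  split => // c hcb hAc; case: (hminb _ hcb); apply/glueP; exists k; left; split => //.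
  exact: wlt_trans hcb hbk.
Qed.

End Glue.

Lemma Dpair_lim d v : Dpair s d v <-> lim_rel L (fun n => Dpair (Some (x n))) d v.
Proof.
split.
- case=> A [C [hA hC -> ->]]; have [_ h0 _ _] := hL.
  exists (fun n => Dseg (Some (x n)) A), (fun n => Useg (Some (x n)) A), C; split => //.
  + by move=> n; exists A, set0; rewrite setU0.
  + exact: Dseg_lim_disjoint.
  + exact: Dseg_lim.
  + by rewrite Useg_lim setUC.
- case=> o [w [C [hR hcross hC -> ->]]].
  have [An hAn] := choice hR.
  have hLA n b : L (An n b) by have [? []] := hAn n.
  have ho n : o n = Dseg (Some (x n)) (An n) by have [? []] := hAn n.
  have hLw n : L (w n).
    by have [Cn [_ hCn _ ->]] := hAn n; apply: base_setU => //; exact: base_Useg.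
  have hUw n : Useg (Some (x n)) (An n) `<=` w n.
    by have [Cn [_ _ _ ->]] := hAn n; exact: subsetUl.
  exists (glue An w), C; split => //.
  + by move=> b; exact: base_glue.
  + by rewrite (Dseg_glue ho hUw hcross).
  + by rewrite (Useg_glue hUw) setUC.
Qed.

End Limit.

Lemma represents_IsT s T : IsT wlt s T ->
  forall d v, represents L T d v <-> Dpair s d v.
Proof.
elim=> {s T} [s hs|s m T hm hT IH|s x Ts _ hnm hxs _ hcof hodd hT IH] d v.
- exact: iff_trans (represents_fsingle _ _ _) (iff_sym (Dpair_zero _ _ hs)).
- apply: iff_trans (represents_succ _ _ _ (labels_cover_IsT hT)) _.
  exact: iff_trans (succ_rel_iff _ _ _ IH) (iff_sym (Dpair_succ _ _ hm)).
- apply: iff_trans (represents_lim _ _ _ (fun n => labels_cover_IsT (hT n))) _.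
  exact: iff_trans (lim_rel_iff _ _ _ IH) (iff_sym (Dpair_lim hnm hxs hcof hodd _ _)).
Qed.

Lemma Dop_Dseg A : Dop wlt A = Dseg None A.
Proof.
apply/seteqP; split=> z.
- case=> b [rb [ra [hb ha hne]]] [hAb hmin]; exists b; split => //.
  + by rewrite (iffLR (parityP _ _) hb) (iffLR (parityP _ _) ha).
  + by split => // c hcb hAc; apply: hmin; exists c.
- case=> b [_ hp [hAb hmin]]; exists b.
  + by exists (parity (Some b)), (parity None); split => //; exact: parity_spec.
  + by split => // -[c hcb hAc]; exact: hmin c hcb hAc.
Qed.

Lemma Dclass_Dpair A : Dclass wlt L A <-> Dpair None A setT.
Proof.
have [hLT _ _ _] := hL; split.
- case=> A' [hA' ->]; exists A', setT; split => //; first exact: Dop_Dseg.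
  by rewrite setUT.
- by case=> A' [C [hA' _ -> _]]; exists A'; rewrite Dop_Dseg.
Qed.

End SegmentDifferences.

Theorem proposition4p10 (X : Type) (L : set (set X)) (hL : is_base L)
  (W : Type) (wlt : W -> W -> Prop) (hW : countable_wellorder wlt)
  (T : forest2) (hT : IsT wlt None T) :
  forall A : set X, Lforest L T (chi A) <-> Dclass wlt L A.
Proof.
move=> A; apply: iff_trans (Lforest_chi _ _ (labels_cover_IsT hT)) _.
apply: iff_trans (represents_IsT hL hW hT A setT) _.
exact: iff_sym (Dclass_Dpair hL hW A).
Qed.
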